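(* Let $V_3$ be the subgroup of $P\Sigma_3$ generated by $\nu_{31},\nu_{32},\nu_{33}$, and $OP\Sigma_3=P\Sigma_3/V_3$. Then $V_3$ is a free group of rank $3$, $OP\Sigma_3$ is a free group of rank $3$ (generated by the images of $\xi_{1,2},\xi_{2,1},\xi_{1,3}$), and $P\Sigma_3=V_3\rtimes OP\Sigma_3$ is an almost-direct product, i.e. a semidirect product in which $OP\Sigma_3$ acts trivially on $V_3^{ab}$.
   Context: $F_3$ is the free group on $x_1,x_2,x_3$. For $i\neq j$, $\xi_{i,j}\in\mathrm{Aut}(F_3)$ is given by $\xi_{i,j}(x_i)=x_j^{-1}x_ix_j$ and $\xi_{i,j}(x_l)=x_l$ for $l\neq i$; $P\Sigma_3$ is the subgroup generated by all $\xi_{i,j}$. For $1\leq i\leq 3$, $\nu_{3i}$ is the inner automorphism $x_k\mapsto x_i^{-1}x_kx_i$ of $F_3$ (so $V_3=\mathrm{Inn}(F_3)$, which is normal in $P\Sigma_3$). *)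

From HB Require Import structures.
From mathcomp Require Import ssreflect ssrfun ssrbool eqtype ssrnat seq path.
From mathcomp Require Import choice fintype bigop monoid.

Set Implicit Arguments.
Unset Strict Implicit.
Unset Printing Implicit Defensive.

(* The free group F_3 on x_1, x_2, x_3, modelled by freely reduced words.    *)
(* Generators are indexed by 'I_3: index 0,1,2 stands for x_1,x_2,x_3.       *)
(* A letter (i, false) is x_i, a letter (i, true) is x_i^{-1}.               *)

Definition letter := ('I_3 * bool)%type.

Definition flip (a : letter) : letter := (a.1, ~~ a.2).

Definition reduced (w : seq letter) : bool :=
  sorted (fun a b => b != flip a) w.

Definition push (a : letter) (w : seq letter) : seq letter :=
  if w is b :: w' then (if b == flip a then w' else a :: w) else [:: a].

Definition reduce (s : seq letter) : seq letter := foldr push [::] s.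

Lemma push_reduced a w : reduced w -> reduced (push a w).
Proof.
case: w => [|b w] //= H.
case: eqP => [_|/eqP ne].
  by case: w H => //= c w /andP [].
by rewrite /reduced /= ne.
Qed.

Lemma reduce_reduced s : reduced (reduce s).
Proof. by elim: s => [|a s IH] //=; apply: push_reduced. Qed.

Record F3 := MkF3 { fword :> seq letter; fwordP : reduced fword }.

Definition F3one : F3 := @MkF3 [::] isT.
Definition F3mul (u v : F3) : F3 :=
  @MkF3 (reduce (fword u ++ fword v)) (reduce_reduced _).
Definition F3inv (u : F3) : F3 :=
  @MkF3 (reduce (rev (map flip (fword u)))) (reduce_reduced _).

Definition x_ (i : 'I_3) : F3 := @MkF3 [:: (i, false)] isT.

Definition letterF (f : 'I_3 -> F3) (a : letter) : F3 :=
  if a.2 then F3inv (f a.1) else f a.1.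
Definition extF (f : 'I_3 -> F3) (w : F3) : F3 :=
  foldr (fun a acc => F3mul (letterF f a) acc) F3one (fword w).

(* Automorphisms are handled as functions F3 -> F3; the group law of Aut(F3) *)
(* is composition (f * g := f \o g), the unit is id.                        *)

Definition Aut3 := (F3 -> F3)%type.

Definition inverse_of (f g : Aut3) : Prop := cancel f g /\ cancel g f.

Inductive gen (S : Aut3 -> Prop) : Aut3 -> Prop :=
| gen_id : gen S id
| gen_S f : S f -> gen S f
| gen_comp f g : gen S f -> gen S g -> gen S (f \o g)
| gen_inv f g : gen S f -> inverse_of f g -> gen S g.

Definition xi (i j : 'I_3) : Aut3 :=
  extF (fun l => if l == i then F3mul (F3inv (x_ j)) (F3mul (x_ i) (x_ j))
                 else x_ l).

Definition nu (i : 'I_3) : Aut3 :=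
  fun w => F3mul (F3inv (x_ i)) (F3mul w (x_ i)).

Definition PSigma3 : Aut3 -> Prop :=
  gen (fun f => exists i j : 'I_3, i != j /\ f = xi i j).
Definition V3 : Aut3 -> Prop := gen (fun f => exists i : 'I_3, f = nu i).

Definition commsub (H : Aut3 -> Prop) : Aut3 -> Prop :=
  gen (fun h => exists f g f' g', [/\ H f, H g, inverse_of f f', inverse_of g g'
                                    & h = f' \o g' \o f \o g]).

Definition evalA (b binv : 'I_3 -> Aut3) (w : F3) : Aut3 :=
  foldr (fun a acc => (if a.2 then binv a.1 else b a.1) \o acc) id (fword w).

Definition free_basis3 (H : Aut3 -> Prop) (b : 'I_3 -> Aut3) : Prop :=
  exists binv : 'I_3 -> Aut3,
    [/\ forall i, inverse_of (b i) (binv i),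
        injective (evalA b binv)
      & forall f, H f <-> exists w, f = evalA b binv w].

Definition free_rank3 (H : Aut3 -> Prop) : Prop :=
  exists b : 'I_3 -> Aut3, free_basis3 H b.

Local Open Scope group_scope.
Definition evalG (G : groupType) (q : 'I_3 -> G) (w : F3) : G :=
  \prod_(a <- fword w) (if a.2 then (q a.1)^-1 else q a.1).
Local Close Scope group_scope.

(* pi : PSigma3 -> Q is a quotient map of PSigma3 by V3, i.e. a surjective
   homomorphism (on PSigma3) with kernel V3; Q is then a model of OP Sigma_3 *)
Definition quotient_map_PS_V (Q : groupType) (pi : Aut3 -> Q) : Prop :=
  [/\ forall f g, PSigma3 f -> PSigma3 g -> pi (f \o g) = (pi f * pi g)%g,
      forall q : Q, exists2 f, PSigma3 f & pi f = q
    & forall f, PSigma3 f -> (pi f = 1%g <-> V3 f)].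

Definition i1 : 'I_3 := @Ordinal 3 0 isT.
Definition i2 : 'I_3 := @Ordinal 3 1 isT.
Definition i3 : 'I_3 := @Ordinal 3 2 isT.

Definition OPgens (Q : groupType) (pi : Aut3 -> Q) : 'I_3 -> Q :=
  fun k => if k == i1 then pi (xi i1 i2)
           else if k == i2 then pi (xi i2 i1) else pi (xi i1 i3).

(* [V_3] is the group of inner automorphisms [t |-> t ^ c]; as [F_3] has trivial
   centre, [c] is determined by the automorphism, so [V_3] is free on the
   [nu_(3i)].  Every element of [P Sigma_3] is an inner automorphism composed
   with an element of [H = <xi_12, xi_21, xi_13>].  An element of [H] fixes
   [x_3] and conjugates [x_1], [x_2] by conjugators [A], [B] (normalised not to
   begin with [x_1], resp. [x_2]).  Along a reduced word in the generators of
   [H], the last letter is read off the reduced words of [A] and [B]: [A] ends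
   with [x_2^e B], [B] ends with [x_1^e A], or the trailing [x_3]-powers of [A]
   and [B] differ in the direction of [e].  Hence [A <> B] for a nontrivial
   word, whereas an inner automorphism fixing [x_3] would give [A = B].  So [H]
   is free, meets [V_3] trivially, and maps isomorphically onto [OP Sigma_3].
   Finally every element [g] of [P Sigma_3] conjugates each [x_i], hence
   [c^-1 g(c)] lies in [[F_3, F_3]], i.e. [g] acts trivially on [V_3^ab]. *)

From HB Require Import structures.
From mathcomp Require Import ssreflect ssrfun ssrbool eqtype ssrnat seq path.
From mathcomp Require Import choice fintype bigop monoid.
From Stdlib Require Import FunctionalExtensionality ClassicalEpsilon ZArith Lia.
From mathcomp Require Import zify.

Set Implicit Arguments.
Unset Strict Implicit.
Unset Printing Implicit Defensive.

(** * Free reduction *)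

Lemma cat_cons_sizeI (T : Type) (s1 s2 t1 t2 : seq T) x y :
  s1 ++ x :: t1 = s2 ++ y :: t2 -> size s1 = size s2 -> t1 = t2.
Proof.
rewrite -!cat_rcons => e es; have := congr1 (drop (size (rcons s1 x))) e.
by rewrite drop_size_cat // size_rcons es -(size_rcons s2 y) drop_size_cat.
Qed.

Lemma cat_cons_suffixI (T : Type) (p p' b : seq T) x x' :
  p ++ x :: b = p' ++ x' :: b -> x = x'.
Proof.
move=> e; have sp : size p = size p'.
  by move/(congr1 size): e; rewrite !size_cat /=; lia.
by have := congr1 (fun s => nth x s (size p)) e; rewrite /= {2}sp !nth_cat !ltnn !subnn.
Qed.

Lemma flipK : involutive flip.
Proof. by case=> i b; rewrite /flip /= negbK. Qed.

Lemma flip_eq a b : (flip a == b) = (a == flip b).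
Proof. by apply/eqP/eqP => [<-|->]; rewrite flipK. Qed.

Lemma neq_flip a : a != flip a.
Proof. by case: a => i b; rewrite /flip xpair_eqE eqxx /=; case: b. Qed.

Definition nocancel (a : letter) (w : seq letter) :=
  if w is b :: _ then b != flip a else true.

Lemma reduced_cons a w : reduced (a :: w) = nocancel a w && reduced w.
Proof. by case: w. Qed.

Lemma reduced_behead a w : reduced (a :: w) -> reduced w.
Proof. by rewrite reduced_cons => /andP[]. Qed.

Lemma push_cons a w : nocancel a w -> push a w = a :: w.
Proof. by case: w => //= b w /negbTE ->. Qed.

Lemma reduce_id w : reduced w -> reduce w = w.
Proof.
elim: w => // a w IHw; rewrite reduced_cons => /andP[aw rw].
by rewrite /= IHw // push_cons.
Qed.

Lemma pushK a w : reduced w -> push a (push (flip a) w) = w.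
Proof.
case: w => [|b w] rw /=; first by rewrite eqxx.
rewrite flipK; case: eqP => [<- | _] /=; last by rewrite eqxx.
by apply: push_cons; move: rw; rewrite reduced_cons => /andP[].
Qed.

Definition reduce_onto (r s : seq letter) := foldr push r s.

Lemma reduce_onto_reduced r s : reduced r -> reduced (reduce_onto r s).
Proof. by move=> rr; elim: s => //= a s IHs; apply: push_reduced. Qed.

Lemma reduce_onto_push r a w : reduced r -> reduced w ->
  reduce_onto r (push a w) = push a (reduce_onto r w).
Proof.
move=> rr; case: w => [|b w] //= rw; case: eqP => [-> | _] //=.
by rewrite pushK // reduce_onto_reduced.
Qed.

Lemma reduce_onto_reduce r s : reduced r -> reduce_onto r (reduce s) = reduce_onto r s.
Proof.
move=> rr; elim: s => //= a s IHs.
by rewrite reduce_onto_push // ?IHs // reduce_reduced.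
Qed.

Lemma reduce_cat s t : reduce (s ++ t) = reduce_onto (reduce t) s.
Proof. by rewrite /reduce foldr_cat. Qed.

Lemma reduce_catl s t : reduce (reduce s ++ t) = reduce (s ++ t).
Proof. by rewrite !reduce_cat reduce_onto_reduce // reduce_reduced. Qed.

Lemma reduce_catr s t : reduce (s ++ reduce t) = reduce (s ++ t).
Proof. by rewrite !reduce_cat reduce_id // reduce_reduced. Qed.

Definition winv (s : seq letter) := rev (map flip s).

Lemma winvK : involutive winv.
Proof. by move=> s; rewrite /winv map_rev revK -map_comp (eq_map flipK) map_id. Qed.

Lemma winv_cons a s : winv (a :: s) = rcons (winv s) (flip a).
Proof. by rewrite /winv /= rev_cons. Qed.

Lemma size_winv s : size (winv s) = size s.
Proof. by rewrite /winv size_rev size_map. Qed.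

Lemma reduced_winv s : reduced s -> reduced (winv s).
Proof.
rewrite /reduced /winv rev_sorted sorted_map; apply: sub_sorted => a b /=.
by rewrite flipK eq_sym.
Qed.

Lemma reduced_rev s : reduced s -> reduced (rev s).
Proof.
rewrite /reduced rev_sorted; apply: sub_sorted => a b /=.
by rewrite eq_sym flip_eq.
Qed.

Lemma reduced_rcons s z : reduced (rcons s z) = reduced s && (z != flip (last z s)).
Proof.
case: s => [|x s]; first by rewrite /= eq_sym flip_eq neq_flip.
by rewrite /reduced /= rcons_path.
Qed.

Lemma reduced_cat s t x : reduced s -> reduced t ->
  nocancel (last x s) t -> reduced (s ++ t).
Proof.
case: s => [|y s] //; case: t => [|z t]; rewrite ?cats0 // /reduced /= => rs rt.
by rewrite cat_path rs /= => ->.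
Qed.

Lemma reduce_winvl s : reduced s -> reduce (winv s ++ s) = [::].
Proof.
move=> rs; rewrite reduce_cat reduce_id // -[s in reduce_onto s]cats0.
elim: s {rs} => //= a s IHs.
by rewrite winv_cons -cats1 /reduce_onto foldr_cat /= flipK eqxx.
Qed.

Lemma reduce_winvr s : reduced s -> reduce (s ++ winv s) = [::].
Proof. by move=> rs; rewrite -{1}(winvK s) reduce_winvl // reduced_winv. Qed.

(** * The group [F_3] *)

HB.instance Definition _ := [isSub for fword].
HB.instance Definition _ := [Choice of F3 by <:].

Lemma F3mulA : associative F3mul.
Proof. by move=> u v w; apply: val_inj; rewrite /= reduce_catl reduce_catr catA. Qed.

Lemma F3mul1 : left_id F3one F3mul.
Proof. by move=> u; apply: val_inj; rewrite /= reduce_id // fwordP. Qed.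

Lemma F3mulr1 : right_id F3one F3mul.
Proof. by move=> u; apply: val_inj; rewrite /= cats0 reduce_id // fwordP. Qed.

Lemma F3mulV : left_inverse F3one F3inv F3mul.
Proof. by move=> u; apply: val_inj; rewrite /= reduce_catl reduce_winvl // fwordP. Qed.

Lemma F3mulVr : right_inverse F3one F3inv F3mul.
Proof. by move=> u; apply: val_inj; rewrite /= reduce_catr reduce_winvr // fwordP. Qed.

HB.instance Definition _ := isGroup.Build F3 F3mulA F3mul1 F3mulr1 F3mulV F3mulVr.

Local Open Scope group_scope.

Lemma fword_inj : injective fword.
Proof. exact: val_inj. Qed.

Lemma fword_mul (u v : F3) : fword (u * v) = reduce (fword u ++ fword v).
Proof. by []. Qed.

Lemma fword_inv (u : F3) : fword u^-1 = winv (fword u).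
Proof. by rewrite /= reduce_id // reduced_winv // fwordP. Qed.

Definition word1 (a : letter) : F3 := @MkF3 [:: a] isT.

Lemma word1_flip a : word1 (flip a) = (word1 a)^-1.
Proof. exact: val_inj. Qed.

Lemma word1_inv i : word1 (i, true) = (x_ i)^-1.
Proof. exact: (word1_flip (i, false)). Qed.

Lemma F3_cons a s (rs : reduced (a :: s)) :
  MkF3 rs = word1 a * MkF3 (reduced_behead rs).
Proof. by apply: val_inj; rewrite /= -[RHS]/(reduce (a :: s)) reduce_id. Qed.

Lemma F3_ind (P : F3 -> Prop) :
  P 1 -> (forall a w, P w -> P (word1 a * w)) -> forall w, P w.
Proof.
move=> P1 PM [s]; elim: s => [|a s IHs] rs; last by rewrite F3_cons; apply: PM.
by rewrite (_ : MkF3 rs = 1) //; apply: val_inj.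
Qed.

Section GroupMorphism.
Variables (G H : groupType) (f : G -> H).
Hypothesis fM : {morph f : u v / u * v}.

Lemma gmorph1 : f 1 = 1.
Proof. by apply: (mulgI (f 1)); rewrite -fM !mulg1. Qed.

Lemma gmorphV u : f u^-1 = (f u)^-1.
Proof. by apply: (mulgI (f u)); rewrite -fM !mulgV gmorph1. Qed.

Lemma gmorphJ u c : f (u ^ c) = f u ^ f c.
Proof. by rewrite /conjg !fM gmorphV. Qed.

Lemma gmorph_inj : (forall u, f u = 1 -> u = 1) -> injective f.
Proof. by move=> f1 u v fuv; apply/divg1_eq/f1; rewrite fM gmorphV fuv mulgV. Qed.

End GroupMorphism.

Definition letterG (G : groupType) (q : 'I_3 -> G) (a : letter) : G :=
  if a.2 then (q a.1)^-1 else q a.1.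

Lemma evalGE (G : groupType) (q : 'I_3 -> G) w :
  evalG q w = \prod_(a <- fword w) letterG q a.
Proof. by []. Qed.

Lemma letterG_flip (G : groupType) (q : 'I_3 -> G) a :
  letterG q (flip a) = (letterG q a)^-1.
Proof. by case: a => i [] /=; rewrite /letterG /= ?invgK. Qed.

Lemma extF_evalG f w : extF f w = evalG f w.
Proof.
rewrite evalGE /extF; elim: (fword w) => [|a s IHs]; first by rewrite big_nil.
by rewrite big_cons -IHs.
Qed.

Section EvalG.
Variables (G : groupType) (q : 'I_3 -> G).

Lemma prod_reduce s :
  \prod_(a <- reduce s) letterG q a = \prod_(a <- s) letterG q a.
Proof.
elim: s => //= a s IHs; rewrite big_cons -IHs.
case: (reduce s) => [|b w] /=; first by rewrite big_seq1 big_nil mulg1.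
case: eqP => [-> | _]; last by rewrite big_cons.
by rewrite big_cons letterG_flip mulVKg.
Qed.

Lemma evalG_morph : {morph evalG q : u v / u * v}.
Proof. by move=> u v; rewrite !evalGE fword_mul prod_reduce big_cat. Qed.

Lemma evalG_x i : evalG q (x_ i) = q i.
Proof. by rewrite evalGE big_seq1. Qed.

End EvalG.

Lemma extF_morph f : {morph extF f : u v / u * v}.
Proof. by move=> u v; rewrite !extF_evalG evalG_morph. Qed.

Lemma extF_x f i : extF f (x_ i) = f i.
Proof. by rewrite extF_evalG evalG_x. Qed.

Lemma word1E a : word1 a = letterG x_ a.
Proof. by case: a => i [] //; rewrite word1_inv. Qed.

Lemma morph_eq_gen (G : groupType) (g h : F3 -> G) :
  {morph g : u v / u * v} -> {morph h : u v / u * v} ->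
  (forall i, g (x_ i) = h (x_ i)) -> g =1 h.
Proof.
move=> gM hM ghx; elim/F3_ind => [|a w IHw]; first by rewrite (gmorph1 gM) (gmorph1 hM).
rewrite gM hM IHw word1E; congr (_ * _).
by case: a => i [] /=; rewrite /letterG /= ?(gmorphV gM) ?(gmorphV hM) ghx.
Qed.

Lemma morph_funext (g h : F3 -> F3) :
  {morph g : u v / u * v} -> {morph h : u v / u * v} ->
  (forall i, g (x_ i) = h (x_ i)) -> g = h.
Proof. by move=> gM hM ghx; apply: functional_extensionality; apply: morph_eq_gen. Qed.

(** * Inner automorphisms and [V_3] *)

Definition inner (c : F3) : Aut3 := fun t => t ^ c.

Lemma inner_morph c : {morph inner c : u v / u * v}.
Proof. by move=> u v; rewrite /inner conjMg. Qed.

Lemma innerM c d : inner (c * d) = inner d \o inner c.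
Proof. by apply: functional_extensionality => t; rewrite /inner /= conjgM. Qed.

Lemma inner1 : inner 1 = id.
Proof. by apply: functional_extensionality => t; rewrite /inner conjg1. Qed.

Lemma inner_inverse c : inverse_of (inner c) (inner c^-1).
Proof. by split=> t; rewrite /inner ?conjgK ?conjgKV. Qed.

Lemma inverse_of_uniq (f g g' : Aut3) : inverse_of f g -> inverse_of f g' -> g = g'.
Proof.
move=> [fg gf] [fg' g'f]; apply: functional_extensionality => t.
by rewrite -{1}[t]g'f fg.
Qed.

Lemma inverse_of_comp (f f' g g' : Aut3) :
  inverse_of f f' -> inverse_of g g' -> inverse_of (f \o g) (g' \o f').
Proof. by move=> [ff' f'f] [gg' g'g]; split=> t /=; rewrite ?ff' ?gg' ?f'f ?g'g. Qed.

Lemma morph_inner (h : Aut3) c : {morph h : u v / u * v} ->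
  h \o inner c = inner (h c) \o h.
Proof.
by move=> hM; apply: functional_extensionality => t /=; rewrite /inner (gmorphJ hM).
Qed.

Definition nohead (i : 'I_3) (w : seq letter) :=
  if w is a :: _ then a.1 != i else true.

Lemma fword_conj_letter (A : F3) l : nohead l.1 A ->
  fword (word1 l ^ A) = winv A ++ l :: A.
Proof.
move=> nA; rewrite fword_mul fword_inv reduce_catr reduce_id //.
have rA := fwordP A; apply: (@reduced_cat _ _ l); first exact: reduced_winv.
  case: (fword A) rA nA => //= b w rA nA.
  by rewrite rA andbT; apply: contra nA => /eqP ->.
rewrite /=; case: (fword A) nA => [_|b w nA]; first exact: neq_flip.
by rewrite winv_cons last_rcons flipK; apply: contra nA => /eqP ->.
Qed.

Lemma conj_letter_inj (A B : F3) l : nohead l.1 A -> nohead l.1 B ->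
  word1 l ^ A = word1 l ^ B -> A = B.
Proof.
move=> nA nB /(congr1 fword); rewrite !fword_conj_letter // => eAB.
have sAB : size A = size B.
  by have := congr1 size eAB; rewrite !size_cat /= !size_winv; lia.
by apply/val_inj/(cat_cons_sizeI eAB); rewrite !size_winv.
Qed.

Fixpoint strip (i : 'I_3) (w : seq letter) :=
  if w is a :: w' then (if a.1 == i then strip i w' else w) else [::].

Lemma strip_reduced i w : reduced w -> reduced (strip i w).
Proof.
by elim: w => //= a w IHw rw; case: ifP => // _; apply: IHw (reduced_behead rw).
Qed.

Definition stripg i (A : F3) : F3 := MkF3 (strip_reduced i (fwordP A)).
Arguments stripg : simpl never.

Lemma fword_stripg i A : fword (stripg i A) = strip i A.
Proof. by []. Qed.

Lemma nohead_strip i w : nohead i (strip i w).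
Proof. by elim: w => //= a w IHw; case: ifP => //= ->. Qed.

Lemma strip_cat i s t : nohead i t -> strip i (s ++ t) = strip i s ++ t.
Proof.
move=> nt; elim: s => [|a s IHs] /=; last by case: ifP.
by case: t nt => //= a t /negbTE ->.
Qed.

Lemma strip_nil i w : strip i w = [::] -> all (fun a => a.1 == i) w.
Proof. by elim: w => //= a w IHw; case: ifP => //= -> /IHw. Qed.

Lemma nohead_all i j w : all (fun a : letter => a.1 == i) w -> j != i -> nohead j w.
Proof. by case: w => //= a w /andP[/eqP -> _]; rewrite eq_sym. Qed.

Lemma conj_stripg i A : x_ i ^ stripg i A = x_ i ^ A.
Proof.
case: A => s; elim: s => [|a s IHs] rs //; rewrite /stripg /=.
move: (strip_reduced _ _); rewrite /=; case: ifP => [/eqP ai | _] rs'; last first.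
  by congr (_ ^ _); apply: val_inj.
rewrite F3_cons.
have xa : x_ i ^ word1 a = x_ i.
  by rewrite word1E /letterG ai /conjg; case: (a.2); rewrite ?invgK ?mulgV ?mulg1 ?mulKg.
by rewrite conjgM xa -IHs; congr (_ ^ _); apply: val_inj.
Qed.

Lemma conj_letter_fix (A : F3) l : nohead l.1 A -> word1 l ^ A = word1 l -> A = 1.
Proof. by move=> nA e; apply: (conj_letter_inj (B := 1) nA); rewrite ?conjg1. Qed.

Lemma central_F3 (d : F3) : (forall t, t ^ d = t) -> d = 1.
Proof.
move=> dC; have d1 : stripg i1 d = 1.
  apply: (@conj_letter_fix _ (i1, false)); first exact: nohead_strip.
  by rewrite conj_stripg dC.
apply: (@conj_letter_fix _ (i2, false)); last exact: dC.
by apply: nohead_all (strip_nil (congr1 fword d1)) _.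
Qed.

Lemma inner_inj : injective inner.
Proof.
move=> c d cd; apply/divg1_eq/central_F3 => t.
by rewrite conjgM -[t ^ c]/(inner c t) cd /inner -conjgM mulgV conjg1.
Qed.

Section EvalWord.
Variables (b binv : 'I_3 -> Aut3).
Hypothesis bK : forall k, inverse_of (b k) (binv k).

Definition eval_letter (a : letter) : Aut3 := if a.2 then binv a.1 else b a.1.

Definition eval_word (s : seq letter) : Aut3 :=
  foldr (fun a f => eval_letter a \o f) id s.

Lemma evalAE w : evalA b binv w = eval_word w.
Proof. by []. Qed.

Lemma eval_word_cat s t : eval_word (s ++ t) = eval_word s \o eval_word t.
Proof. by elim: s => //= a s ->. Qed.

Lemma eval_word_reduce s : eval_word (reduce s) = eval_word s.
Proof.
elim: s => //= a s <-; case: (reduce s) => [|c w] //=; case: eqP => [-> | _] //=.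
apply: functional_extensionality => t /=.
by case: a => k [] /=; rewrite /eval_letter /=; case: (bK k).
Qed.

Lemma evalA_mul u v : evalA b binv (u * v) = evalA b binv u \o evalA b binv v.
Proof. by rewrite !evalAE fword_mul eval_word_reduce eval_word_cat. Qed.

Lemma evalA1 : evalA b binv 1 = id.
Proof. by []. Qed.

Lemma evalA_inverse u : inverse_of (evalA b binv u) (evalA b binv u^-1).
Proof. by split=> t; rewrite -[LHS]/((_ \o _) t) -evalA_mul ?mulgV ?mulVg. Qed.

Lemma gen_eval_word (S : Aut3 -> Prop) :
  (forall k, gen S (b k)) -> forall s, gen S (eval_word s).
Proof.
move=> Sb; elim=> [|[k e] s IHs] /=; first exact: gen_id.
apply: gen_comp IHs; rewrite /eval_letter /=.
by case: e; [apply: gen_inv (Sb k) (bK k) | apply: Sb].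
Qed.

End EvalWord.

Definition nuinv (i : 'I_3) : Aut3 := inner (x_ i)^-1.

Lemma nu_inverse i : inverse_of (nu i) (nuinv i).
Proof. exact: inner_inverse. Qed.

Lemma nu_gen_V3 i : gen (fun f => exists i, f = nu i) (nu i).
Proof. by apply: gen_S; exists i. Qed.

Definition wordg (s : seq letter) : F3 := \prod_(a <- s) word1 a.

Lemma wordg_reduced s (rs : reduced s) : wordg s = MkF3 rs.
Proof.
elim: s rs => [|a s IHs] rs; first by rewrite /wordg big_nil; apply: val_inj.
by rewrite /wordg big_cons -/(wordg s) (IHs (reduced_behead rs)) -F3_cons.
Qed.

Lemma eval_word_nu s : eval_word nu nuinv s = inner (wordg (rev s)).
Proof.
elim: s => [|[k e] s IHs] /=; first by rewrite /wordg big_nil inner1.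
rewrite IHs rev_cons /wordg -cats1 big_cat big_seq1 innerM.
by case: e; rewrite /eval_letter //= word1_inv.
Qed.

Definition revg (c : F3) : F3 := MkF3 (reduced_rev (fwordP c)).

Lemma evalA_nu_revg c : evalA nu nuinv (revg c) = inner c.
Proof. by rewrite evalAE eval_word_nu revK (wordg_reduced (fwordP c)); case: c. Qed.

Lemma V3_inner f : V3 f <-> exists c, f = inner c.
Proof.
split=> [|[c ->]].
  elim=> [|g [i ->]|g h _ [c ->] _ [d ->]|g h _ [c ->] gh].
  - by exists 1; rewrite inner1.
  - by exists (x_ i).
  - by exists (d * c); rewrite innerM.
  - by exists c^-1; apply: inverse_of_uniq gh (inner_inverse c).
rewrite -evalA_nu_revg evalAE.
exact: (gen_eval_word nu_inverse nu_gen_V3).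
Qed.

Lemma inner_V3 c : V3 (inner c).
Proof. by apply/V3_inner; exists c. Qed.

Lemma V3_free : free_rank3 V3.
Proof.
exists nu, nuinv; split; [exact: nu_inverse | |].
- move=> u v; rewrite !evalAE !eval_word_nu => /inner_inj.
  rewrite (wordg_reduced (reduced_rev (fwordP u))).
  rewrite (wordg_reduced (reduced_rev (fwordP v))).
  by move/(congr1 (rev \o fword)) => /=; rewrite !revK => /val_inj.
- move=> f; rewrite V3_inner; split=> [[c ->]|[w ->]].
    by exists (revg c); rewrite evalA_nu_revg.
  by exists (wordg (rev w)); rewrite evalAE eval_word_nu.
Qed.

(** * Ping-pong in [H = <xi_12, xi_21, xi_13>] *)

Lemma I3_cases (P : 'I_3 -> Prop) : P i1 -> P i2 -> P i3 -> forall i, P i.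
Proof.
move=> P1 P2 P3 [[|[|[|m]]] lt3] //.
- by rewrite (_ : Ordinal lt3 = i1) //; apply: val_inj.
- by rewrite (_ : Ordinal lt3 = i2) //; apply: val_inj.
- by rewrite (_ : Ordinal lt3 = i3) //; apply: val_inj.
Qed.

(* [yxi k false] for [k = 1, 2, 3] is [xi_12, xi_21, xi_13], as in [OPgens]. *)
Definition ysrc (k : 'I_3) : 'I_3 := if k == i2 then i2 else i1.
Definition ydst (k : 'I_3) : 'I_3 := if k == i1 then i2 else if k == i2 then i1 else i3.

Definition yxi (k : 'I_3) (e : bool) : Aut3 :=
  extF (fun l => if l == ysrc k then x_ (ysrc k) ^ word1 (ydst k, e) else x_ l).

Lemma yxi_xi k : yxi k false = xi (ysrc k) (ydst k).
Proof. by []. Qed.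

Lemma ysrc_ydst k : ysrc k != ydst k.
Proof. by elim/I3_cases: k. Qed.

Lemma yxi_morph k e : {morph yxi k e : u v / u * v}.
Proof. exact: extF_morph. Qed.

Lemma yxi_x k e l :
  yxi k e (x_ l) = if l == ysrc k then x_ (ysrc k) ^ word1 (ydst k, e) else x_ l.
Proof. exact: extF_x. Qed.

Lemma morph_word1 (g : Aut3) j C : {morph g : u v / u * v} ->
  g (x_ j) = x_ j ^ C -> forall e, g (word1 (j, e)) = word1 (j, e) ^ C.
Proof. by move=> gM gx []; rewrite ?word1_inv ?(gmorphV gM) gx ?conjVg. Qed.

Lemma yxi_ydst k e e' : yxi k e (word1 (ydst k, e')) = word1 (ydst k, e').
Proof.
rewrite (morph_word1 (C := 1) (yxi_morph k e)) ?conjg1 //.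
by rewrite yxi_x eq_sym (negbTE (ysrc_ydst k)).
Qed.

Lemma yxiK k e : cancel (yxi k e) (yxi k (~~ e)).
Proof.
apply: (@morph_eq_gen _ (yxi k (~~ e) \o yxi k e) id) => // [u v|l] /=.
  by rewrite !yxi_morph.
rewrite yxi_x; case: ifP => [/eqP -> | nl]; last by rewrite yxi_x nl.
rewrite (gmorphJ (yxi_morph _ _)) yxi_ydst yxi_x eqxx -conjgM.
by rewrite -[word1 (_, ~~ e)]/(word1 (flip (ydst k, e))) word1_flip mulVg conjg1.
Qed.

Lemma yxi_inverse k : inverse_of (yxi k false) (yxi k true).
Proof. by split; [exact: (yxiK k false) | exact: (yxiK k true)]. Qed.

Lemma eval_letter_yxi a : eval_letter (yxi^~ false) (yxi^~ true) a = yxi a.1 a.2.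
Proof. by case: a => k []. Qed.

Definition hword (s : seq letter) : Aut3 := eval_word (yxi^~ false) (yxi^~ true) s.

Lemma hword_morph s : {morph hword s : u v / u * v}.
Proof.
elim: s => [|a s IHs] u v //.
by rewrite /hword /= eval_letter_yxi -!/(hword _) IHs yxi_morph.
Qed.

Lemma hword_rcons s z : hword (rcons s z) = hword s \o yxi z.1 z.2.
Proof. by rewrite /hword -cats1 eval_word_cat /= eval_letter_yxi. Qed.

Definition zsign (e : bool) : Z := if e then (-1)%Z else 1%Z.

Fixpoint x3_head (w : seq letter) : Z :=
  if w is a :: w' then (if a.1 == i3 then zsign a.2 + x3_head w' else 0)%Z else 0%Z.

Lemma x3_head_x3 e w : x3_head ((i3, e) :: w) = (zsign e + x3_head w)%Z.
Proof. by []. Qed.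

Definition x3_tail (w : seq letter) : Z := x3_head (rev w).

Lemma x3_tail_cat_cons p l b : l.1 != i3 -> x3_tail (p ++ l :: b) = x3_tail b.
Proof.
move=> l3; rewrite /x3_tail rev_cat rev_cons -cats1 -catA /=.
by elim: (rev b) => [|a u IHu] /=; rewrite ?(negbTE l3) ?IHu.
Qed.

Lemma x3_tail_strip i w : i != i3 -> x3_tail (strip i w) = x3_tail w.
Proof.
move=> i3'; elim: w => //= a w IHw; case: ifP => // /eqP ai.
by rewrite IHw -(@x3_tail_cat_cons [::] a) // ai.
Qed.

Lemma x3_tail_reduce_rcons a e : reduced a ->
  x3_tail (reduce (a ++ [:: (i3, e)])) = (x3_tail a + zsign e)%Z.
Proof.
case/lastP: a => [|a m] ra; first by rewrite /x3_tail /=; case: e.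
have ra' : reduced a by move: ra; rewrite reduced_rcons => /andP[].
have [-> | nm] := eqVneq m (flip (i3, e)).
  rewrite cat_rcons reduce_cat /= flipK eqxx -[reduce_onto _ _]/(reduce a) reduce_id //.
  by rewrite /x3_tail rev_rcons x3_head_x3; case: e; cbn [zsign negb snd]; lia.
rewrite reduce_id; last first.
  by apply: (reduced_cat (x := m)) => //=; rewrite last_rcons eq_sym flip_eq.
by rewrite /x3_tail cats1 rev_rcons x3_head_x3 Z.add_comm.
Qed.

(* The ping-pong sets: where the pair of conjugators [(A, B)] lands after a
   reduced word of generators of [H] ending with the letter [z]. *)
Definition pingpong (z : letter) (A B : seq letter) : Prop :=
  if z.1 == i1 then exists p, A = p ++ (i2, z.2) :: B
  else if z.1 == i2 then exists p, B = p ++ (i1, z.2) :: A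
  else if z.2 then (x3_tail A < x3_tail B)%Z else (x3_tail B < x3_tail A)%Z.

Lemma pingpong_irrefl z A : ~ pingpong z A A.
Proof.
case: z => k e; rewrite /pingpong /=; case: eqP => _; last case: eqP => _.
- by case=> p /(congr1 size); rewrite size_cat /=; lia.
- by case=> p /(congr1 size); rewrite size_cat /=; lia.
- by case: e; lia.
Qed.

Lemma pingpong_uniq z z' A B : pingpong z A B -> pingpong z' A B -> z = z'.
Proof.
case: z z' => k e [k' e']; elim/I3_cases: k; elim/I3_cases: k'; rewrite /pingpong /=.
- by move=> [p E] [p' E']; case: (cat_cons_suffixI (etrans (esym E) E')) => ->.
- by move=> [p E] [p' /(congr1 size)]; rewrite E size_cat /= size_cat /=; lia.
- by case=> p ->; rewrite x3_tail_cat_cons //; case: e'; lia.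
- by move=> [p E] [p' /(congr1 size)]; rewrite E size_cat /= size_cat /=; lia.
- by move=> [p E] [p' E']; case: (cat_cons_suffixI (etrans (esym E) E')) => ->.
- by case=> p ->; rewrite x3_tail_cat_cons //; case: e'; lia.
- by move=> lt [p E]; move: lt; rewrite E x3_tail_cat_cons //; case: e; lia.
- by move=> lt [p E]; move: lt; rewrite E x3_tail_cat_cons //; case: e; lia.
- by case: e; case: e' => //=; lia.
Qed.

Lemma reduced_cons_nohead k e b : reduced b -> nohead k b -> reduced ((k, e) :: b).
Proof.
move=> rb nb; rewrite reduced_cons rb andbT; case: b rb nb => //= c b _.
by apply: contra => /eqP ->.
Qed.

Lemma strip_conj_suffix (g k : 'I_3) (a b : seq letter) e :
  g != k -> reduced a -> reduced b -> nohead k b ->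
  ~ (exists p, a = p ++ (k, ~~ e) :: b) ->
  exists p, strip g (reduce (a ++ winv b ++ (k, e) :: b)) = p ++ (k, e) :: b.
Proof.
move=> gk ra rb nb noX; set r := reduce (a ++ winv b).
have rr : reduced r := reduce_reduced _.
have rb' := reduced_cons_nohead e rb nb.
have -> : reduce (a ++ winv b ++ (k, e) :: b) = reduce (r ++ (k, e) :: b).
  by rewrite catA reduce_catl.
have rba : reduce (r ++ b) = a.
  by rewrite reduce_catl -catA -reduce_catr reduce_winvl // cats0 reduce_id.
have nc : nocancel (last (k, e) r) ((k, e) :: b).
  case/lastP: r rr rba => [_ _|r' m rr rba]; first exact: neq_flip.
  rewrite /= last_rcons.
  apply/negP => /eqP me; have {}me : m = (k, ~~ e) by rewrite -[m]flipK -me.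
  apply: noX; exists r'; rewrite -rba reduce_id; first by rewrite cat_rcons me.
  apply: (reduced_cat (x := m)) => //; case: b nb {rb rb' rba} => //= c b nb.
  by rewrite last_rcons me; apply: contra nb => /eqP ->.
exists (strip g r); rewrite reduce_id; last exact: reduced_cat nc.
by rewrite strip_cat //= eq_sym.
Qed.

(* The conjugators [(A, B)] with [h (x_1) = x_1 ^ A], [h (x_2) = x_2 ^ B] for
   [h] in [H], normalised so that [A] does not start with [x_1] nor [B] with [x_2];
   [cstep] updates them when [h] is composed on the right with a generator. *)
Definition cstep (AB : F3 * F3) (z : letter) : F3 * F3 :=
  let: (A, B) := AB in
  if z.1 == i1 then (stripg i1 (A * word1 (i2, z.2) ^ B), B)
  else if z.1 == i2 then (A, stripg i2 (B * word1 (i1, z.2) ^ A))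
  else (stripg i1 (A * word1 (i3, z.2)), B).

Definition conjugators (s : seq letter) : F3 * F3 := foldl cstep (1, 1) s.

Lemma conjugators_nohead s :
  nohead i1 (conjugators s).1 /\ nohead i2 (conjugators s).2.
Proof.
elim/last_ind: s => [|s z IHs] //; rewrite /conjugators foldl_rcons -/(conjugators s).
case: (conjugators s) IHs => A B /= [nA nB].
by case: ifP => _; [|case: ifP => _]; split => //; apply: nohead_strip.
Qed.

Lemma cstep_x1 A B e : cstep (A, B) (i1, e) = (stripg i1 (A * word1 (i2, e) ^ B), B).
Proof. by []. Qed.

Lemma cstep_x2 A B e : cstep (A, B) (i2, e) = (A, stripg i2 (B * word1 (i1, e) ^ A)).
Proof. by []. Qed.

Lemma cstep_x3 A B e : cstep (A, B) (i3, e) = (stripg i1 (A * word1 (i3, e)), B).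
Proof. by []. Qed.

Lemma pingpong_x1 e A B : pingpong (i1, e) A B = exists p, A = p ++ (i2, e) :: B.
Proof. by []. Qed.

Lemma pingpong_x2 e A B : pingpong (i2, e) A B = exists p, B = p ++ (i1, e) :: A.
Proof. by []. Qed.

Lemma pingpong_x3 e A B :
  pingpong (i3, e) A B =
  if e then (x3_tail A < x3_tail B)%Z else (x3_tail B < x3_tail A)%Z.
Proof. by []. Qed.

Lemma pingpong_cstep (A B : F3) z : nohead i1 A -> nohead i2 B ->
  ~ pingpong (flip z) A B -> pingpong z (cstep (A, B) z).1 (cstep (A, B) z).2.
Proof.
case: z => k e nA nB; elim/I3_cases: k.
- rewrite pingpong_x1 cstep_x1 pingpong_x1 fword_stripg fword_mul fword_conj_letter //.
  by move=> noX; apply: strip_conj_suffix => //; apply: fwordP.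
- rewrite pingpong_x2 cstep_x2 pingpong_x2 fword_stripg fword_mul fword_conj_letter //.
  by move=> noX; apply: strip_conj_suffix => //; apply: fwordP.
- rewrite pingpong_x3 cstep_x3 pingpong_x3 fword_stripg x3_tail_strip // fword_mul.
  rewrite x3_tail_reduce_rcons; last exact: fwordP.
  by case: e; cbn [negb zsign fst snd]; lia.
Qed.

Lemma pingpong_conjugators s z : reduced (rcons s z) ->
  pingpong z (conjugators (rcons s z)).1 (conjugators (rcons s z)).2.
Proof.
elim/last_ind: s z => [|s z' IHs] z; rewrite /conjugators foldl_rcons -/(conjugators _).
  by move=> _; apply: pingpong_cstep => //; apply: pingpong_irrefl.
rewrite reduced_rcons last_rcons => /andP[rs zz'].
have [nA nB] := conjugators_nohead (rcons s z').
case: (conjugators (rcons s z')) (IHs z' rs) nA nB => A B /= pAB nA nB.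
apply: pingpong_cstep => // /(pingpong_uniq pAB) z'z.
by move: zz'; rewrite z'z flipK eqxx.
Qed.

Lemma hword_x s : [/\ hword s (x_ i3) = x_ i3,
  hword s (x_ i1) = x_ i1 ^ (conjugators s).1 &
  hword s (x_ i2) = x_ i2 ^ (conjugators s).2].
Proof.
elim/last_ind: s => [|s [k e] IHs]; first by rewrite /= !conjg1.
have hM := hword_morph s.
rewrite hword_rcons /conjugators foldl_rcons -/(conjugators s).
case: (conjugators s) IHs => A B /= [h3 h1 h2].
elim/I3_cases: k; rewrite ?cstep_x1 ?cstep_x2 ?cstep_x3 /= !yxi_x /ysrc /ydst /=.
- by split=> //; rewrite conj_stripg (gmorphJ hM) h1 (morph_word1 hM h2) -conjgM.
- by split=> //; rewrite conj_stripg (gmorphJ hM) h2 (morph_word1 hM h1) -conjgM.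
- have h3e : hword s (word1 (i3, e)) = word1 (i3, e).
    by rewrite (morph_word1 (C := 1) hM) ?conjg1.
  by split=> //; rewrite conj_stripg (gmorphJ hM) h1 h3e -conjgM.
Qed.

(* The ping-pong lemma: an inner automorphism fixing [x_3] conjugates [x_1] and
   [x_2] by the same normalised conjugator, which [pingpong] forbids. *)
Lemma hword_inner s c : reduced s -> hword s = inner c -> s = [::].
Proof.
case/lastP: s => // s z rsz hc; exfalso.
have [h3 h1 h2] := hword_x (rcons s z).
have [nA nB] := conjugators_nohead (rcons s z).
have c3 : stripg i3 c = 1.
  apply: (@conj_letter_fix _ (i3, false)); first exact: nohead_strip.
  by rewrite conj_stripg -[_ ^ c]/(inner c _) -hc h3.
have c3s := strip_nil (congr1 fword c3).
have Ac : (conjugators (rcons s z)).1 = c.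
  apply: (@conj_letter_inj _ _ (i1, false)) => //; first exact: nohead_all c3s _.
  by rewrite -h1 hc.
have Bc : (conjugators (rcons s z)).2 = c.
  apply: (@conj_letter_inj _ _ (i2, false)) => //; first exact: nohead_all c3s _.
  by rewrite -h2 hc.
by have := pingpong_conjugators rsz; rewrite Ac Bc; apply: pingpong_irrefl.
Qed.

Definition hy (W : F3) : Aut3 := evalA (yxi^~ false) (yxi^~ true) W.

Lemma hy_inner W c : hy W = inner c -> W = 1.
Proof. by move=> /(hword_inner (fwordP W)) W0; apply: val_inj. Qed.

Lemma hy_morph W : {morph hy W : u v / u * v}.
Proof. exact: hword_morph. Qed.

Lemma hy_mul u v : hy (u * v) = hy u \o hy v.
Proof. exact: (evalA_mul yxi_inverse). Qed.

Lemma hy_inverse W : inverse_of (hy W) (hy W^-1).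
Proof. exact: (evalA_inverse yxi_inverse). Qed.

(** * [P Sigma_3 = V_3 H] and [OP Sigma_3] *)

Lemma xi_morph i j : {morph xi i j : u v / u * v}.
Proof. exact: extF_morph. Qed.

Lemma xi_inner_hy i j : i != j -> exists c W, xi i j = inner c \o hy W.
Proof.
have hy_only W : hy W = inner 1 \o hy W by rewrite inner1.
have eq_gen i' j' c W : (forall l, xi i' j' (x_ l) = inner c (hy W (x_ l))) ->
    xi i' j' = inner c \o hy W.
  by apply: morph_funext; [apply: xi_morph | move=> u v /=; rewrite hy_morph inner_morph].
elim/I3_cases: i; elim/I3_cases: j; try by move/eqP.
- by move=> _; exists 1, (x_ i1); rewrite -hy_only.
- by move=> _; exists 1, (x_ i3); rewrite -hy_only.
- by move=> _; exists 1, (x_ i2); rewrite -hy_only.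
- move=> _; exists (x_ i3), (x_ i3)^-1; apply: eq_gen.
  by elim/I3_cases; apply: fword_inj; vm_compute.
- move=> _; exists (x_ i1), (x_ i2)^-1; apply: eq_gen.
  by elim/I3_cases; apply: fword_inj; vm_compute.
- move=> _; exists (x_ i2), (x_ i1)^-1; apply: eq_gen.
  by elim/I3_cases; apply: fword_inj; vm_compute.
Qed.

Lemma PSigma3_inner_hy f : PSigma3 f -> exists c W, f = inner c \o hy W.
Proof.
elim=> [|g [i [j [ij ->]]]|g h _ [c [W ->]] _ [d [V ->]]|g h _ [c [W ->]] gh].
- by exists 1, 1; rewrite inner1.
- exact: xi_inner_hy.
- exists (hy W d * c), (W * V); rewrite hy_mul innerM.
  by apply: functional_extensionality => t; rewrite /= /inner (gmorphJ (hy_morph W)).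
- exists (hy W^-1 c^-1), W^-1; rewrite -(morph_inner _ (hy_morph W^-1)).
  exact: inverse_of_uniq gh (inverse_of_comp (inner_inverse c) (hy_inverse W)).
Qed.

Lemma nu_PSigma3 i : PSigma3 (nu i).
Proof.
have xiP j k : j != k -> PSigma3 (xi j k) by move=> jk; apply: gen_S; exists j, k.
have eq_gen j k : (forall l, nu i (x_ l) = xi j i (xi k i (x_ l))) ->
    nu i = xi j i \o xi k i.
  by apply: morph_funext => [|u v /=]; [exact: inner_morph | rewrite !xi_morph].
elim/I3_cases: i xiP eq_gen => xiP eq_gen.
- rewrite (eq_gen i2 i3); first by apply: gen_comp; apply: xiP.
  by elim/I3_cases; apply: fword_inj; vm_compute.
- rewrite (eq_gen i1 i3); first by apply: gen_comp; apply: xiP.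
  by elim/I3_cases; apply: fword_inj; vm_compute.
- rewrite (eq_gen i1 i2); first by apply: gen_comp; apply: xiP.
  by elim/I3_cases; apply: fword_inj; vm_compute.
Qed.

Lemma V3_PSigma3 f : V3 f -> PSigma3 f.
Proof.
elim=> [|g [i ->]|g h _ Pg _ Ph|g h _ Pg gh]; first exact: gen_id.
- exact: nu_PSigma3.
- exact: gen_comp.
- exact: gen_inv Pg gh.
Qed.

Lemma inner_PSigma3 c : PSigma3 (inner c).
Proof. exact: V3_PSigma3 (inner_V3 c). Qed.

Definition Hgen (f : Aut3) : Prop := exists k, f = yxi k false.

Lemma Hgen_hy W : gen Hgen (hy W).
Proof. by apply: (gen_eval_word yxi_inverse) => k; apply: gen_S; exists k. Qed.

Lemma hy_PSigma3 W : PSigma3 (hy W).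
Proof.
apply: (gen_eval_word yxi_inverse) => k; apply: gen_S.
by exists (ysrc k), (ydst k); rewrite ysrc_ydst yxi_xi.
Qed.

Lemma gen_Hgen h : gen Hgen h -> exists W, h = hy W.
Proof.
elim=> [|g [k ->]|g h' _ [V ->] _ [W ->]|g h' _ [W ->] gh].
- by exists 1.
- by exists (x_ k).
- by exists (V * W); rewrite hy_mul.
- by exists W^-1; apply: inverse_of_uniq gh (hy_inverse W).
Qed.

Lemma V3_complement : exists S : Aut3 -> Prop,
  [/\ forall h, gen S h -> PSigma3 h,
      forall h, gen S h -> V3 h -> h = id
    & forall f, PSigma3 f -> exists v h, [/\ V3 v, gen S h & f = v \o h]].
Proof.
exists Hgen; split.
- by move=> h /gen_Hgen [W ->]; apply: hy_PSigma3.
- move=> h /gen_Hgen [W ->] /V3_inner [c /hy_inner ->]; exact: evalA1.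
- move=> f /PSigma3_inner_hy [c [W ->]]; exists (inner c), (hy W).
  by split; [apply: inner_V3 | apply: Hgen_hy |].
Qed.

Section Quotient.
Variables (Q : groupType) (pi : Aut3 -> Q).
Hypothesis piQ : quotient_map_PS_V pi.

Lemma pi_hy_morph : {morph pi \o hy : u v / u * v}.
Proof. by case: piQ => piM _ _ u v; rewrite /= hy_mul piM //; apply: hy_PSigma3. Qed.

Lemma pi_hyE : pi \o hy =1 evalG (OPgens pi).
Proof.
apply: morph_eq_gen pi_hy_morph (evalG_morph _) _ => k.
by rewrite evalG_x /=; elim/I3_cases: k.
Qed.

Lemma evalG_OPgens_inj : injective (evalG (OPgens pi)).
Proof.
apply: gmorph_inj (evalG_morph _) _ => w; rewrite -pi_hyE /=.
by case: piQ => _ _ /(_ _ (hy_PSigma3 w)) -> /V3_inner [c /hy_inner].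
Qed.

Lemma evalG_OPgens_surj q : exists w, evalG (OPgens pi) w = q.
Proof.
case: piQ => piM /(_ q) [f /PSigma3_inner_hy [c [W ->]] <-] piV.
exists W; rewrite -pi_hyE /= piM; [|exact: inner_PSigma3|exact: hy_PSigma3].
by rewrite (proj2 (piV _ (inner_PSigma3 c)) (inner_V3 c)) mul1g.
Qed.

Lemma evalG_OPgens_bij : bijective (evalG (OPgens pi)).
Proof.
pose inv q := proj1_sig (constructive_indefinite_description _ (evalG_OPgens_surj q)).
have invK q : evalG (OPgens pi) (inv q) = q.
  by rewrite /inv; case: constructive_indefinite_description.
by exists inv => [w|//]; apply: evalG_OPgens_inj; rewrite invK.
Qed.

End Quotient.

(** * [P Sigma_3] acts trivially on [V_3^ab] *)

Definition basis_conjugating (g : Aut3) : Prop :=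
  {morph g : u v / u * v} /\ forall i, exists w, g (x_ i) = x_ i ^ w.

Lemma PSigma3_basis_conjugating g : PSigma3 g -> basis_conjugating g.
Proof.
elim=> [|f [i [j [_ ->]]]|f h _ [fM fx] _ [hM hx]|f h _ [fM fx] [fh hf]].
- by split=> // i; exists 1; rewrite conjg1.
- split=> [|l]; first exact: xi_morph.
  rewrite /xi extF_x; case: ifP => [/eqP -> | _]; first by exists (x_ j).
  by exists 1; rewrite conjg1.
- split=> [u v|i] /=; first by rewrite hM fM.
  have [w ->] := hx i; have [w' fi] := fx i.
  by exists (w' * f w); rewrite (gmorphJ fM) fi conjgM.
- have hM : {morph h : u v / u * v}.
    by move=> u v; apply: (can_inj fh); rewrite fM !hf.
  split=> // i; have [w fi] := fx i; exists (h w)^-1.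
  by have := congr1 h fi; rewrite fh (gmorphJ hM) => {2}->; rewrite conjgK.
Qed.

Inductive derived : F3 -> Prop :=
| derived1 : derived 1
| derived_comm u v : derived [~ u, v]
| derivedM a b : derived a -> derived b -> derived (a * b)
| derivedV a : derived a -> derived a^-1.

Lemma derivedJ a w : derived a -> derived (a ^ w).
Proof.
elim=> [|u v|a1 a2 _ d1 _ d2|a1 _ d1].
- by rewrite conj1g; apply: derived1.
- by rewrite conjRg; apply: derived_comm.
- by rewrite conjMg; apply: derivedM.
- by rewrite conjVg; apply: derivedV.
Qed.

Lemma derived_basis_conjugating g c : basis_conjugating g -> derived (c^-1 * g c).
Proof.
case=> gM gx; elim/F3_ind: c => [|a w IHw].
  by rewrite (gmorph1 gM) invg1 mulg1; apply: derived1.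
have [W ga] : exists W, g (word1 a) = word1 a ^ W.
  by case: a => i e; have [W gi] := gx i; exists W; apply: morph_word1.
have -> : (word1 a * w)^-1 * g (word1 a * w)
          = ((word1 a)^-1 * g (word1 a)) ^ w * (w^-1 * g w).
  by rewrite gM invgM /conjg !mulgA mulgK.
by apply: derivedM IHw; apply: derivedJ; rewrite ga -commgEl; apply: derived_comm.
Qed.

Lemma derived_commsub c : derived c -> commsub V3 (inner c).
Proof.
have invV u : inverse_of (inner u^-1) (inner u).
  by rewrite -{2}[u]invgK; apply: inner_inverse.
elim=> [|u v|a b _ Ha _ Hb|a _ Ha].
- by rewrite inner1; apply: gen_id.
- apply: gen_S; exists (inner v^-1), (inner u^-1), (inner v), (inner u).
  split; [exact: inner_V3 | exact: inner_V3 | exact: invV | exact: invV |].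
  by rewrite /commg /conjg !innerM.
- by rewrite innerM; apply: gen_comp.
- exact: gen_inv Ha (inner_inverse a).
Qed.

Lemma PSigma3_trivial_on_V3ab g g' v v' : PSigma3 g -> V3 v ->
  inverse_of g g' -> inverse_of v v' -> commsub V3 (g \o v \o g' \o v').
Proof.
move=> Pg /V3_inner [c ->] gg' /(inverse_of_uniq (inner_inverse c)) <-.
have [gM _] := PSigma3_basis_conjugating Pg.
have -> : g \o inner c \o g' \o inner c^-1 = inner (c^-1 * g c).
  apply: functional_extensionality => t.
  by rewrite /= /inner (gmorphJ gM) (proj2 gg') conjgM.
exact/derived_commsub/derived_basis_conjugating/PSigma3_basis_conjugating.
Qed.

Theorem mainTheorem8 :
  (* V_3 is a free group of rank 3 *)
  free_rank3 V3 /\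
  (* OP Sigma_3 = P Sigma_3 / V_3 is free of rank 3 on the images of
     xi_{1,2}, xi_{2,1}, xi_{1,3}: for every quotient map pi of P Sigma_3
     by V_3, the homomorphism F_3 -> Q, x_k |-> (those images), is bijective *)
  (forall (Q : groupType) (pi : Aut3 -> Q),
      quotient_map_PS_V pi -> bijective (evalG (OPgens pi))) /\
  (* P Sigma_3 = V_3 >| H for a complement H (a subgroup isomorphic to
     OP Sigma_3) *)
  (exists S : Aut3 -> Prop,
      [/\ forall h, gen S h -> PSigma3 h,
          forall h, gen S h -> V3 h -> h = id
        & forall f, PSigma3 f -> exists v h, [/\ V3 v, gen S h & f = v \o h]]) /\
  (* almost-direct: conjugation by P Sigma_3 acts trivially on V_3^ab *)
  (forall g g' v v', PSigma3 g -> V3 v -> inverse_of g g' -> inverse_of v v' ->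
      commsub V3 (g \o v \o g' \o v')).
Proof.
split; first exact: V3_free.
split; first by move=> Q pi; apply: evalG_OPgens_bij.
split; first exact: V3_complement.
exact: PSigma3_trivial_on_V3ab.
Qed.
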